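(* Let $\mathfrak S$ be a commutative semiring and $\sigma_{\mathfrak S}$ a set of ideals of $\mathfrak S$ that contains the zero ideal $\{0\}$. Then $\sigma_{\mathfrak S}$, endowed with the ideal topology, is connected.
   Context: A semiring $(\mathfrak S,+,0,\cdot,1)$ has $(\mathfrak S,+,0)$ a commutative monoid, $(\mathfrak S,\cdot,1)$ a monoid, $0r=r0=0$, and two-sided distributivity; all semirings are commutative. An ideal is a nonempty proper subset closed under addition and under multiplication by elements of $\mathfrak S$. For an ideal $\mathfrak a$, $\mathfrak a^{\uparrow}=\{\mathfrak x\in\sigma_{\mathfrak S}\mid\mathfrak a\subseteq\mathfrak x\}$; the ideal topology on $\sigma_{\mathfrak S}$ has these sets ($\mathfrak a$ any ideal) as a subbasis of closed sets. *)

From HB Require Import structures.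
From mathcomp Require Import all_boot all_algebra.
From mathcomp Require Import boolp classical_sets.
Set Implicit Arguments. Unset Strict Implicit. Unset Printing Implicit Defensive.
Import GRing.Theory.
Local Open Scope ring_scope.
Local Open Scope classical_set_scope.

Definition is_ideal (S : comPzSemiRingType) (a : set S) : Prop :=
  [/\ a !=set0, a <> setT,
      (forall x y, a x -> a y -> a (x + y)) &
      (forall r x, a x -> a (r * x))].

Definition zero_ideal (S : comPzSemiRingType) : set S := [set 0].
Arguments zero_ideal S : clear implicits.

Definition up_set (S : comPzSemiRingType) (sigma : set (set S)) (a : set S)
  : set (set S) := [set x | sigma x /\ a `<=` x].

(* Finite unions of subbasic closed sets (n = 0 gives the empty set). *)
Definition finunion_up (S : comPzSemiRingType) (sigma : set (set S))
  (B : set (set S)) : Prop :=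
  exists (n : nat) (f : 'I_n -> set S),
    (forall i, is_ideal (f i)) /\
    B = [set x | exists i, up_set sigma (f i) x].

(* Closed sets of the ideal topology on sigma: the topology generated by the
   subbasis of closed sets a^uparrow, i.e. arbitrary intersections (inside sigma)
   of finite unions of subbasic closed sets. *)
Definition ideal_closed (S : comPzSemiRingType) (sigma : set (set S))
  (C : set (set S)) : Prop :=
  exists P : set (set (set S)),
    (forall B, P B -> finunion_up sigma B) /\
    C = [set x | sigma x /\ forall B, P B -> B x].

Definition ideal_connected (S : comPzSemiRingType) (sigma : set (set S)) : Prop :=
  forall C1 C2 : set (set S),
    ideal_closed sigma C1 -> ideal_closed sigma C2 ->
    C1 `|` C2 = sigma -> C1 `&` C2 = set0 ->
    C1 = set0 \/ C2 = set0.

From mathcomp Require Import all_boot all_algebra.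
From mathcomp Require Import boolp classical_sets.
Import GRing.Theory.
Local Open Scope ring_scope.
Local Open Scope classical_set_scope.

(* Every ideal contains 0, so a subbasic closed set a^uparrow containing the
   zero ideal has a included in {0} and is all of sigma. Hence the zero ideal is a
   generic point: its closure is the whole space, and a space with a dense
   point cannot split into two disjoint nonempty closed sets. *)

Set Implicit Arguments.

Section IdealTopology.
Variables (S : comPzSemiRingType) (sigma : set (set S)).

Lemma ideal0 (a : set S) : is_ideal a -> a 0.
Proof. by move=> [[x ax] _ _ aM]; rewrite -(mul0r x); exact: aM. Qed.

Lemma sub_zero_ideal (a y : set S) :
  a `<=` zero_ideal S -> is_ideal y -> a `<=` y.
Proof. by move=> a0 /ideal0 y0 z /a0 ->. Qed.

Lemma finunion_up_zero_ideal (B : set (set S)) (y : set S) :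
  finunion_up sigma B -> B (zero_ideal S) -> sigma y -> is_ideal y -> B y.
Proof.
move=> [n [f [_ ->]]] [i [_ fi0]] sy yI.
by exists i; split=> //; exact: sub_zero_ideal.
Qed.

Lemma ideal_closed_zero_ideal (C : set (set S)) :
  (forall y, sigma y -> is_ideal y) ->
  ideal_closed sigma C -> C (zero_ideal S) -> C = sigma.
Proof.
move=> sigmaI [P [PB ->]] [_ C0]; apply/seteqP; split=> [y [] //|y sy].
by split=> // B PBB; apply: finunion_up_zero_ideal (sigmaI y sy); [exact: PB|exact: C0|].
Qed.

Lemma ideal_connected_generic (p : set S) : sigma p ->
  (forall C, ideal_closed sigma C -> C p -> C = sigma) ->
  ideal_connected sigma.
Proof.
move=> sp generic C1 C2 cC1 cC2 C12 C1C2.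
have : (C1 `|` C2) p by rewrite C12.
have disjoint y : C1 y -> C2 y -> False by move=> *; rewrite -[False]/(set0 y) -C1C2.
case=> [/(generic _ cC1) E|/(generic _ cC2) E].
- by right; apply/seteqP; split=> // y C2y; apply: (disjoint y) => //; rewrite E -C12; right.
- by left; apply/seteqP; split=> // y C1y; apply: (disjoint y) => //; rewrite E -C12; left.
Qed.

End IdealTopology.

Theorem theorem3p13 (S : comPzSemiRingType) (sigma : set (set S))
  (Hsigma : forall x, sigma x -> is_ideal x)
  (Hzero : sigma (zero_ideal S)) :
  ideal_connected sigma.
Proof.
apply: (ideal_connected_generic Hzero) => C.
exact: ideal_closed_zero_ideal.
Qed.
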